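(* Let $C$ be an identifying code of $K_n\times K_m$. If $cs(C)=n-1$, then there is no column $C_j$ with $C\cap C_j=\{u,v\}$ (for distinct $u,v$) where both $u$ and $v$ are row-isolated in $C$. Similarly, if $rs(C)=m-1$, there is no row $R_r$ with $C\cap R_r=\{u,v\}$ (for distinct $u,v$) where both $u$ and $v$ are column-isolated in $C$.
   Context: $K_n\times K_m$ is the direct product of complete graphs: vertex set $[n]\times[m]$, with $(i,r)$ adjacent to $(j,s)$ iff $i\ne j$ and $r \ne s$. An identifying code is a dominating set $C$ with $N[x]\cap C\ne N[y]\cap C$ for all distinct vertices $x,y$ ($N[x]$ the closed neighborhood). Columns: $C_i=\{(i,t):t\in[m]\}$; rows: $R_r=\{(k,r):k\in[n]\}$. $cs(C)$ (resp. $rs(C)$) is the number of columns (resp. rows) meeting $C$. A vertex $v=(i,r)$ is column-isolated in $C$ if $C\cap C_i=\{v\}$ and row-isolated in $C$ if $C\cap R_r=\{v\}$. *)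

From mathcomp Require Import all_boot.
Set Implicit Arguments. Unset Strict Implicit. Unset Printing Implicit Defensive.

Section KnKm.
Variables n m : nat.
Definition vtx := ('I_n * 'I_m)%type.

Definition adj (x y : vtx) : bool := (x.1 != y.1) && (x.2 != y.2).

Definition cnbh (x : vtx) : {set vtx} := [set y | (y == x) || adj x y].

Definition dominating (C : {set vtx}) : Prop :=
  forall x : vtx, cnbh x :&: C != set0.

Definition identifying_code (C : {set vtx}) : Prop :=
  dominating C /\
  forall x y : vtx, x != y -> cnbh x :&: C != cnbh y :&: C.

Definition column (i : 'I_n) : {set vtx} := [set v | v.1 == i].
Definition row (r : 'I_m) : {set vtx} := [set v | v.2 == r].

Definition cs (C : {set vtx}) : nat := #|[set i : 'I_n | column i :&: C != set0]|.
Definition rs (C : {set vtx}) : nat := #|[set r : 'I_m | row r :&: C != set0]|.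

Definition col_isolated (C : {set vtx}) (v : vtx) : Prop := C :&: column v.1 = [set v].
Definition row_isolated (C : {set vtx}) (v : vtx) : Prop := C :&: row v.2 = [set v].
End KnKm.

From mathcomp Require Import all_boot.
Set Implicit Arguments. Unset Strict Implicit. Unset Printing Implicit Defensive.

(* If cs(C) = n-1, some column i0 of K_n x K_m misses C.  Suppose
   C meets column j exactly in u != v, both row-isolated, and put x = (i0, v.2).
   Since x is outside C, N[x] meets C in the code vertices adjacent to x; they
   all avoid column i0, so the only condition left is to avoid row v.2, whose
   only code vertex is v: N[x] /\ C = C \ {v}.  On the other side N[u] /\ C
   consists of u and the code vertices outside column j (= {u,v} on C) and
   outside row u.2 (= {u} on C), which is again C \ {v}.  As u != x, C does
   not separate u from x: a contradiction.  Transposing (i,r) |-> (r,i) exchanges rows and columns, preserves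
   adjacency, hence identifying codes, and turns rs, row pairs and column
   isolation into cs, column pairs and row isolation; the row statement is the
   column statement for the transposed code. *)

Section Columns.
Variables n m : nat.
Implicit Types (C : {set vtx n m}) (u v y : vtx n m).

Lemma row_isolatedP C v y : row_isolated C v -> y \in C -> (y.2 == v.2) = (y == v).
Proof. by move/setP/(_ y); rewrite !inE => <- ->. Qed.

Lemma row_isolated_mem C v : row_isolated C v -> v \in C.
Proof. by move/setP/(_ v); rewrite !inE !eqxx andbT => ->. Qed.

Lemma empty_column C : cs C < n -> exists i0 : 'I_n, forall y, y \in C -> y.1 != i0.
Proof.
rewrite /cs; set S := [set i | _] => ltSn.
have /card_gt0P [i0] : 0 < #|~: S| by rewrite -(ltn_add2l #|S|) addn0 cardsC card_ord.
rewrite !inE negbK => /eqP emptyi0; exists i0 => y yC; apply/negP => /eqP yi0.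
have : y \in column m i0 :&: C by rewrite !inE yi0 eqxx.
by rewrite emptyi0 inE.
Qed.

Lemma nbh_outside_code C (i0 : 'I_n) v :
  (forall y, y \in C -> y.1 != i0) -> row_isolated C v ->
  cnbh (i0, v.2) :&: C = C :\ v.
Proof.
move=> avoid isov; apply/setP => y; rewrite !inE /adj /=.
case yC: (y \in C); rewrite ?andbF // andbT.
have -> : (y == (i0, v.2)) = false.
  by apply/negbTE; apply: contra (avoid y yC) => /eqP ->.
by rewrite andbT eq_sym avoid // eq_sym (row_isolatedP isov yC).
Qed.

Lemma nbh_of_twin C (j : 'I_n) u v :
  u != v -> C :&: column m j = [set u; v] -> row_isolated C u ->
  cnbh u :&: C = C :\ v.
Proof.
move=> uv colj isou.
have onj y : y \in C -> (y.1 == j) = (y == u) || (y == v).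
  by move=> yC; move/setP/(_ y): colj; rewrite !inE yC.
have /eqP u1 : u.1 == j by rewrite onj ?eqxx ?(row_isolated_mem isou).
apply/setP => y; rewrite !inE /adj.
case yC: (y \in C); rewrite ?andbF // andbT.
rewrite u1 [j == _]eq_sym (onj y yC) [u.2 == _]eq_sym (row_isolatedP isou yC).
by case: eqP => [->|_] //=; rewrite andbT.
Qed.

(* The column half of the theorem: the two neighbourhoods above coincide. *)
Lemma no_isolated_twins_in_column C :
  identifying_code C -> cs C = n.-1 ->
  ~ (exists (j : 'I_n) u v,
       [/\ u != v, C :&: column m j = [set u; v],
           row_isolated C u & row_isolated C v]).
Proof.
move=> [_ separates] csC [j [u [v [uv colj isou isov]]]].
have [i0 avoid] : exists i0 : 'I_n, forall y, y \in C -> y.1 != i0.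
  by apply: empty_column; rewrite csC ltn_predL (leq_ltn_trans _ (ltn_ord j)).
have u_x : u != (i0, v.2).
  by apply: contra (avoid u (row_isolated_mem isou)) => /eqP ->.
by move/negP: (separates _ _ u_x); rewrite (nbh_of_twin uv colj isou) nbh_outside_code.
Qed.
End Columns.

Section SwapPreimage.
Variables T1 T2 : finType.
Implicit Types A B : {set T1 * T2}.

Lemma preim_swapK A : swap_pair @^-1: (swap_pair @^-1: A : {set T2 * T1}) = A.
Proof. by apply/setP => x; rewrite !inE swap_pairK. Qed.

Lemma preim_swap_eq A B :
  ((swap_pair @^-1: A : {set T2 * T1}) == swap_pair @^-1: B) = (A == B).
Proof. by apply/eqP/eqP => [e|-> //]; rewrite -[A]preim_swapK e preim_swapK. Qed.

Lemma preim_swap_eq0 A : ((swap_pair @^-1: A : {set T2 * T1}) == set0) = (A == set0).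
Proof. by rewrite -[set0 in LHS](preimset0 swap_pair) preim_swap_eq. Qed.

Lemma preim_swap2 (u v : T1 * T2) :
  swap_pair @^-1: [set u; v] = [set swap_pair u; swap_pair v] :> {set T2 * T1}.
Proof. by apply/setP => x; rewrite !inE !(can2_eq swap_pairK swap_pairK). Qed.
End SwapPreimage.

Section Transpose.
Variables n m : nat.
Implicit Types C : {set vtx n m}.

Definition transpose C : {set vtx m n} := swap_pair @^-1: C.

Lemma cnbh_swap (x : vtx m n) : cnbh x = swap_pair @^-1: cnbh (swap_pair x).
Proof.
apply/setP => y; rewrite !inE /adj /swap_pair /= andbC.
by rewrite (inj_eq (can_inj swap_pairK)).
Qed.

Lemma nbh_transpose C (x : vtx m n) :
  cnbh x :&: transpose C = swap_pair @^-1: (cnbh (swap_pair x) :&: C).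
Proof. by rewrite cnbh_swap preimsetI. Qed.

Lemma identifying_code_transpose C : identifying_code C -> identifying_code (transpose C).
Proof.
move=> [dominates separates]; split => [x|x y xy]; rewrite !nbh_transpose.
  by rewrite preim_swap_eq0.
by rewrite preim_swap_eq separates // (inj_eq (can_inj swap_pairK)).
Qed.

Lemma column_transpose C (i : 'I_m) :
  column n i :&: transpose C = swap_pair @^-1: (row n i :&: C).
Proof. by apply/setP => x; rewrite !inE. Qed.

Lemma row_transpose C (r : 'I_n) :
  transpose C :&: row m r = swap_pair @^-1: (C :&: column m r).
Proof. by apply/setP => x; rewrite !inE. Qed.

Lemma rs_transpose C : rs C = cs (transpose C).
Proof. by apply: eq_card => i; rewrite !inE column_transpose preim_swap_eq0. Qed.

Lemma col_isolated_transpose C v :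
  col_isolated C v -> row_isolated (transpose C) (swap_pair v).
Proof.
rewrite /row_isolated row_transpose => ->.
by apply/setP => x; rewrite !inE (can2_eq swap_pairK swap_pairK).
Qed.

Lemma twins_transpose C (r : 'I_m) u v :
  C :&: row n r = [set u; v] ->
  transpose C :&: column n r = [set swap_pair u; swap_pair v].
Proof. by move=> e; rewrite setIC column_transpose setIC e preim_swap2. Qed.
End Transpose.

Theorem mainTheorem10 (n m : nat) (C : {set vtx n m}) :
  identifying_code C ->
  (cs C = n.-1 ->
     ~ (exists (j : 'I_n) (u v : vtx n m),
          [/\ u != v, C :&: column m j = [set u; v],
              row_isolated C u & row_isolated C v])) /\
  (rs C = m.-1 ->
     ~ (exists (r : 'I_m) (u v : vtx n m),
          [/\ u != v, C :&: row n r = [set u; v],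
              col_isolated C u & col_isolated C v])).
Proof.
move=> code; split; first exact: no_isolated_twins_in_column.
move=> rsC [r [u [v [uv rowr isou isov]]]].
apply: (no_isolated_twins_in_column (identifying_code_transpose code)).
  by rewrite -rs_transpose.
exists r, (swap_pair u), (swap_pair v); split.
- by rewrite (inj_eq (can_inj swap_pairK)).
- exact: twins_transpose.
- exact: col_isolated_transpose.
- exact: col_isolated_transpose.
Qed.
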